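(* Assume $1-p(n)\sim c/\ln n$ for some $c>0$, and write $p=p(n)$. Then $$\lim_{n\to\infty}\frac{Y^{(p)}_0(\tau_n)}{n}=(2+\beta){\rm e}^{-\alpha c}\quad\text{in probability},$$ where $\alpha=(1+\beta)/(2+\beta)$.
   Context: Fix $\beta>-1$, $p\in(0,1)$. Continuous-time preferential attachment: $T(0)$ is the single edge on $\{0,1\}$; when the current tree has vertex set $\{0,\dots,n\}$, each vertex $i$ has an independent exponential clock with parameter $d_n(i)+\beta$ ($d_n(i)$ its current degree), and at the first ring vertex $n+1$ is attached to the vertex whose clock rang. $T(t)$ is the tree at time $t$ and $\tau_n=\inf\{t\ge0:|T(t)|=n+1\}$. Each edge $e_j$ joining vertex $j\ge1$ to its parent carries an independent uniform$[0,1]$ mark $U_j$, independent of the growth; $e_j$ is intact if $U_j\le p$ and is cut otherwise, a cut edge being kept as two half-edges, one attached to each endpoint. $T^{(p)}_0(t)$ is the set of vertices connected to $0$ by intact edges, $H^{(p)}_0(t)$ the number of half-edges attached to its vertices, and $Y^{(p)}_0(t)=2(|T^{(p)}_0(t)|-1)+H^{(p)}_0(t)+\beta|T^{(p)}_0(t)|$. *)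

From Stdlib Require Import Reals List Arith.
Import ListNotations.
Open Scope R_scope.

(* A tree on vertices {0,...,n} is encoded by its parent list [ps] of length n:
   the parent of vertex j (1 <= j <= n) is [nth (j-1) ps 0]; the edge e_j joins
   j to its parent. *)
Definition parent (ps : list nat) (j : nat) : nat := nth (j - 1) ps 0%nat.

Definition deg (ps : list nat) (i : nat) : nat :=
  ((if Nat.eqb i 0 then 0 else 1) + length (filter (Nat.eqb i) ps))%nat.

(* Law of the tree T(tau_{k+1}) (vertex set {0,...,k+1}), as a finite list of
   (outcome, probability) pairs: the embedded jump chain of the continuous-time
   process.  From a tree on {0..m} (m = k'+1, m edges, total rate
   sum_i (d(i)+beta) = 2m + beta (m+1)), vertex m+1 attaches to i with
   probability (d(i)+beta)/(2m + beta(m+1)) (competing exponential clocks). *)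
Fixpoint tdist (beta : R) (k : nat) : list (list nat * R) :=
  match k with
  | O => [([0%nat], 1)]
  | S k' =>
      flat_map (fun pw =>
        map (fun i => (fst pw ++ [i],
                       snd pw * ((INR (deg (fst pw) i) + beta)
                                 / (INR (2 * (k' + 1)) + beta * INR (k' + 2)))))
            (seq 0 (k' + 2)))
        (tdist beta k')
  end.

(* Law of the intact/cut indicators of edges e_1..e_n: edge e_j is intact
   (U_j <= p) with probability p, independently; bs[j-1] = true iff e_j intact. *)
Fixpoint mdist (p : R) (n : nat) : list (list bool * R) :=
  match n with
  | O => [([], 1)]
  | S n' =>
      flat_map (fun bw => [(fst bw ++ [true], snd bw * p);
                           (fst bw ++ [false], snd bw * (1 - p))])
        (mdist p n')
  end.

Definition intact (bs : list bool) (j : nat) : bool := nth (j - 1) bs false.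

(* v is connected to 0 by intact edges (fuel-bounded; parents are smaller) *)
Fixpoint conn (ps : list nat) (bs : list bool) (fuel v : nat) : bool :=
  match fuel with
  | O => Nat.eqb v 0
  | S f => Nat.eqb v 0 || (intact bs v && conn ps bs f (parent ps v))
  end.

Definition inT0 (ps : list nat) (bs : list bool) (v : nat) : bool := conn ps bs v v.

Definition sizeT0 (ps : list nat) (bs : list bool) : nat :=
  length (filter (inT0 ps bs) (seq 0 (S (length ps)))).

(* H_0^{(p)}: half-edges of cut edges attached to vertices of T_0^{(p)} *)
Definition H0 (ps : list nat) (bs : list bool) : nat :=
  fold_right Nat.add 0%nat
    (map (fun j => if intact bs j then 0%nat
                   else ((if inT0 ps bs j then 1 else 0)
                         + (if inT0 ps bs (parent ps j) then 1 else 0))%nat)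
         (seq 1 (length ps))).

Definition Y0 (beta : R) (ps : list nat) (bs : list bool) : R :=
  2 * (INR (sizeT0 ps bs) - 1) + INR (H0 ps bs) + beta * INR (sizeT0 ps bs).

Definition sumR (l : list R) : R := fold_right Rplus 0 l.

Definition prob_at (beta q : R) (n : nat)
    (E : list nat -> list bool -> bool) : R :=
  sumR (map (fun pw =>
    sumR (map (fun bw => if E (fst pw) (fst bw) then snd pw * snd bw else 0)
              (mdist q (length (fst pw)))))
    (tdist beta (n - 1))).

Definition Rgtb (x y : R) : bool := if Rlt_dec y x then true else false.

From Stdlib Require Import Reals Lra Lia List Arith.
From Coquelicot Require Import Coquelicot.
Import ListNotations.
Open Scope R_scope.

(* Proof strategy: second-moment method on the exact law.

   Attaching vertex m+1 to i with mark b changes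
      Y = Y_0^{(p)} by [i in T_0] (2+beta if b, 1 otherwise), and Y equals the
      total attachment rate sum_{v in T_0} (deg v + beta) of the root cluster.
   2. Tower property.  Averaging one step of the jump chain, a new vertex hits
      T_0 with probability Y / Vtot k, where Vtot k = 2(k+1) + beta (k+2) is the
      total rate.  This gives closed recursions for E[Y] and E[Y^2].
   3. Analysis of the normalised moments meanN = E[Y]/Vtot, varN = Var(Y/Vtot):
      meanN decays by factors 1 - delta/Vtot with delta = (1-q)(1+beta), so it is
      sandwiched between exponentials of -delta Hsum with Hsum ~ ln n/(2+beta);
      varN is bounded, via a non-increasing potential, by a quantity that
      vanishes as q -> 1.
   4. Chebyshev's inequality for Y(tau_n)/n, and the limits
      Vtot(n-1)/n -> 2+beta, meanN -> exp(-alpha c), varN -> 0, conclude. *)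

Lemma sumR_app l1 l2 : sumR (l1 ++ l2) = sumR l1 + sumR l2.
Proof. induction l1; simpl; [lra | rewrite IHl1; lra]. Qed.

Lemma sumR_map_plus {A} (f g : A -> R) l :
  sumR (map (fun x => f x + g x) l) = sumR (map f l) + sumR (map g l).
Proof. induction l; simpl; [lra | rewrite IHl; lra]. Qed.

Lemma sumR_map_scal {A} (c : R) (f : A -> R) l :
  sumR (map (fun x => c * f x) l) = c * sumR (map f l).
Proof. induction l; simpl; [lra | rewrite IHl; lra]. Qed.

Lemma sumR_map_ext_in {A} (f g : A -> R) l :
  (forall x, In x l -> f x = g x) -> sumR (map f l) = sumR (map g l).
Proof. intros H; now rewrite (map_ext_in f g l H). Qed.

Lemma sumR_map_le {A} (f g : A -> R) l :
  (forall x, In x l -> f x <= g x) -> sumR (map f l) <= sumR (map g l).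
Proof.
  induction l as [|a l IH]; simpl; intros H; [lra|].
  assert (f a <= g a) by auto.
  assert (sumR (map f l) <= sumR (map g l)) by auto. lra.
Qed.

Lemma sumR_flat_map {A B} (f : B -> R) (h : A -> list B) l :
  sumR (map f (flat_map h l)) = sumR (map (fun x => sumR (map f (h x))) l).
Proof. induction l; simpl; [lra | rewrite map_app, sumR_app, IHl; lra]. Qed.

Lemma sumR_exchange {A B} (f : A -> B -> R) l1 l2 :
  sumR (map (fun x => sumR (map (fun y => f x y) l2)) l1) =
  sumR (map (fun y => sumR (map (fun x => f x y) l1)) l2).
Proof.
  induction l1; simpl.
  - induction l2; simpl; [lra | rewrite <- IHl2; lra].
  - now rewrite IHl1, <- sumR_map_plus.
Qed.

Lemma sumR_map_zero {A} (l : list A) : sumR (map (fun _ => 0) l) = 0.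
Proof. induction l; simpl; [lra | rewrite IHl; lra]. Qed.

Lemma sumR_delta (f : nat -> R) i n : (i < n)%nat ->
  sumR (map (fun v => if Nat.eqb v i then f v else 0) (seq 0 n)) = f i.
Proof.
  intros Hi.
  replace n with (i + S (n - S i))%nat by lia.
  rewrite seq_app, map_app, sumR_app. simpl (0 + i)%nat.
  rewrite (sumR_map_ext_in _ (fun _ => 0) (seq 0 i)), sumR_map_zero.
  2:{ intros v Hv. apply in_seq in Hv. destruct (Nat.eqb_spec v i); [lia | reflexivity]. }
  simpl. rewrite Nat.eqb_refl.
  rewrite (sumR_map_ext_in _ (fun _ => 0) (seq (S i) _)), sumR_map_zero; [ring|].
  intros v Hv. apply in_seq in Hv. destruct (Nat.eqb_spec v i); [lia | reflexivity].
Qed.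

(* A parent list encodes a tree rooted at 0 when every parent precedes its
   child; this is the invariant of the growth process. *)
Definition wf_tree (ps : list nat) : Prop :=
  forall j, (1 <= j <= length ps)%nat -> (parent ps j < j)%nat.

Lemma parent_app ps i j : (1 <= j <= length ps)%nat -> parent (ps ++ [i]) j = parent ps j.
Proof. intros H; unfold parent; apply app_nth1; lia. Qed.

Lemma parent_last ps i : parent (ps ++ [i]) (S (length ps)) = i.
Proof.
  unfold parent; simpl; rewrite Nat.sub_0_r, app_nth2, Nat.sub_diag by lia; reflexivity.
Qed.

Lemma intact_app bs b j : (1 <= j <= length bs)%nat -> intact (bs ++ [b]) j = intact bs j.
Proof. intros H; unfold intact; apply app_nth1; lia. Qed.

Lemma intact_last bs b : intact (bs ++ [b]) (S (length bs)) = b.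
Proof.
  unfold intact; simpl; rewrite Nat.sub_0_r, app_nth2, Nat.sub_diag by lia; reflexivity.
Qed.

Lemma wf_tree_app ps i : wf_tree ps -> (i <= length ps)%nat -> wf_tree (ps ++ [i]).
Proof.
  intros W Hi j Hj. rewrite length_app in Hj; simpl in Hj.
  destruct (Nat.eq_dec j (S (length ps))) as [->|Hn].
  - rewrite parent_last; lia.
  - rewrite parent_app by lia. apply W; lia.
Qed.

Lemma wf_tree_app_inv ps i : wf_tree (ps ++ [i]) -> wf_tree ps /\ (i <= length ps)%nat.
Proof.
  intros W. split.
  - intros j Hj. rewrite <- (parent_app ps i j Hj). apply W. rewrite length_app; simpl; lia.
  - specialize (W (S (length ps))). rewrite parent_last, length_app in W. simpl in W. lia.
Qed.

(* Parents are smaller than children, so every parent label is a vertex. *)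
Lemma wf_tree_in ps x : wf_tree ps -> In x ps -> (x < length ps)%nat.
Proof.
  intros W Hx. destruct (In_nth ps x 0%nat Hx) as [idx [Hidx Hn]].
  assert (parent ps (S idx) = x) by (unfold parent; simpl; rewrite Nat.sub_0_r; auto).
  specialize (W (S idx)); lia.
Qed.

Lemma conn_app ps bs i b : wf_tree ps -> length bs = length ps ->
  forall f v, (v <= length ps)%nat -> conn (ps ++ [i]) (bs ++ [b]) f v = conn ps bs f v.
Proof.
  intros W L f; induction f as [|f IH]; intros v Hv; [reflexivity|].
  simpl. destruct (Nat.eqb_spec v 0); [reflexivity|].
  rewrite intact_app, parent_app by lia.
  rewrite IH; [reflexivity|]. specialize (W v); lia.
Qed.

Lemma conn_fuel ps bs : wf_tree ps ->
  forall f1 f2 v, (v <= f1)%nat -> (v <= f2)%nat -> (v <= length ps)%nat ->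
  conn ps bs f1 v = conn ps bs f2 v.
Proof.
  intros W f1; induction f1 as [|f1 IH]; intros f2 v H1 H2 H3.
  - replace v with 0%nat by lia. destruct f2; reflexivity.
  - destruct f2 as [|f2]; [replace v with 0%nat by lia; reflexivity|].
    simpl. destruct (Nat.eqb_spec v 0); [reflexivity|].
    specialize (W v). rewrite (IH f2); [reflexivity | lia | lia | lia].
Qed.

Lemma inT0_app ps bs i b v : wf_tree ps -> length bs = length ps -> (v <= length ps)%nat ->
  inT0 (ps ++ [i]) (bs ++ [b]) v = inT0 ps bs v.
Proof. intros; unfold inT0; apply conn_app; auto. Qed.

Lemma inT0_new ps bs i b : wf_tree ps -> length bs = length ps -> (i <= length ps)%nat ->
  inT0 (ps ++ [i]) (bs ++ [b]) (S (length ps)) = andb b (inT0 ps bs i).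
Proof.
  intros W L Hi. unfold inT0. simpl conn.
  replace (intact (bs ++ [b]) (S (length ps))) with b by (rewrite <- L; now rewrite intact_last).
  rewrite parent_last, conn_app by auto.
  simpl. f_equal. apply conn_fuel; auto.
Qed.

Lemma sizeT0_app ps bs i b : wf_tree ps -> length bs = length ps -> (i <= length ps)%nat ->
  sizeT0 (ps ++ [i]) (bs ++ [b]) =
  (sizeT0 ps bs + (if andb b (inT0 ps bs i) then 1 else 0))%nat.
Proof.
  intros W L Hi. unfold sizeT0. rewrite length_app, Nat.add_1_r, seq_S, filter_app, length_app.
  f_equal.
  - f_equal. apply filter_ext_in. intros v Hv. apply in_seq in Hv.
    apply inT0_app; auto; lia.
  - simpl. rewrite inT0_new by auto. destruct (andb b (inT0 ps bs i)); reflexivity.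
Qed.

Lemma fold_add_app l1 l2 :
  fold_right Nat.add 0%nat (l1 ++ l2) =
  (fold_right Nat.add 0%nat l1 + fold_right Nat.add 0%nat l2)%nat.
Proof. induction l1; simpl; lia. Qed.

Lemma H0_app ps bs i b : wf_tree ps -> length bs = length ps -> (i <= length ps)%nat ->
  H0 (ps ++ [i]) (bs ++ [b]) =
  (H0 ps bs + (if b then 0 else if inT0 ps bs i then 1 else 0))%nat.
Proof.
  intros W L Hi. unfold H0. rewrite length_app, Nat.add_1_r, seq_S, map_app, fold_add_app.
  f_equal.
  - f_equal. apply map_ext_in. intros j Hj. apply in_seq in Hj.
    rewrite intact_app, parent_app, (inT0_app ps bs i b j) by (auto; lia).
    rewrite (inT0_app ps bs i b (parent ps j)) by (auto; specialize (W j); lia).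
    reflexivity.
  - simpl. replace (intact (bs ++ [b]) (S (length ps))) with b
      by (rewrite <- L; now rewrite intact_last).
    rewrite inT0_new, parent_last, inT0_app by auto.
    destruct b; simpl; lia.
Qed.

(* Growth of Y: attaching a vertex to the root cluster adds 2+beta if the new
   edge is intact (one edge, one vertex) and 1 if it is cut (one half-edge). *)
Lemma Y0_app beta ps bs i b : wf_tree ps -> length bs = length ps -> (i <= length ps)%nat ->
  Y0 beta (ps ++ [i]) (bs ++ [b]) =
  Y0 beta ps bs + (if inT0 ps bs i then 1 else 0) * (if b then 2 + beta else 1).
Proof.
  intros W L Hi. unfold Y0. rewrite sizeT0_app, H0_app, !plus_INR by auto.
  destruct b, (inT0 ps bs i); simpl; ring.
Qed.

Lemma deg_app ps i v : deg (ps ++ [i]) v = (deg ps v + (if Nat.eqb v i then 1 else 0))%nat.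
Proof. unfold deg. rewrite filter_app, length_app. simpl. destruct (Nat.eqb v i); simpl; lia. Qed.

Lemma deg_new ps i : wf_tree ps -> (i <= length ps)%nat -> deg (ps ++ [i]) (S (length ps)) = 1%nat.
Proof.
  intros W Hi. unfold deg.
  replace (filter (Nat.eqb (S (length ps))) (ps ++ [i])) with (@nil nat); [reflexivity|].
  rewrite <- (filter_false (ps ++ [i])) at 1. symmetry. apply filter_ext_in.
  intros x Hx. apply Nat.eqb_neq.
  apply in_app_or in Hx. destruct Hx as [Hx|[<-|[]]]; [apply (wf_tree_in ps x W) in Hx|]; lia.
Qed.

Lemma weighted_deg_sum_app beta (h : nat -> R) ps i : wf_tree ps -> (i <= length ps)%nat ->
  sumR (map (fun v => h v * (INR (deg (ps ++ [i]) v) + beta)) (seq 0 (S (length (ps ++ [i]))))) =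
  sumR (map (fun v => h v * (INR (deg ps v) + beta)) (seq 0 (S (length ps))))
  + h i + h (S (length ps)) * (1 + beta).
Proof.
  intros W Hi. rewrite length_app, Nat.add_1_r, seq_S, map_app, sumR_app.
  simpl (0 + S _)%nat. cbn [map sumR fold_right]. rewrite deg_new by auto.
  rewrite (sumR_map_ext_in _ (fun v => h v * (INR (deg ps v) + beta)
                                    + (if Nat.eqb v i then h v else 0))).
  2:{ intros v _. rewrite deg_app, plus_INR. destruct (Nat.eqb v i); simpl; ring. }
  rewrite sumR_map_plus, sumR_delta by lia. simpl. ring.
Qed.

Lemma deg_pos ps : wf_tree ps -> ps <> [] ->
  forall v, (v <= length ps)%nat -> (1 <= deg ps v)%nat.
Proof.
  induction ps as [|i ps IH] using rev_ind; intros W Hne v Hv; [congruence|].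
  apply wf_tree_app_inv in W as [W Hi].
  rewrite length_app in Hv; simpl in Hv.
  destruct (Nat.eq_dec v (S (length ps))) as [->|Hn]; [rewrite deg_new by auto; lia|].
  rewrite deg_app. destruct ps as [|x ps'].
  - simpl in Hi, Hv, Hn. replace v with 0%nat by lia. replace i with 0%nat by lia. simpl; lia.
  - specialize (IH W ltac:(discriminate) v ltac:(lia)). lia.
Qed.

(* Handshake lemma: the total rate of a tree with m edges is 2m + beta (m+1). *)
Lemma total_rate ps beta : wf_tree ps ->
  sumR (map (fun v => INR (deg ps v) + beta) (seq 0 (S (length ps))))
  = INR (2 * length ps) + beta * INR (S (length ps)).
Proof.
  induction ps as [|i ps IH] using rev_ind; intros W.
  - unfold deg; simpl. ring.
  - apply wf_tree_app_inv in W as [W Hi].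
    rewrite (sumR_map_ext_in _ (fun v => 1 * (INR (deg (ps ++ [i]) v) + beta)))
      by (intros; ring).
    rewrite (weighted_deg_sum_app beta (fun _ => 1)) by auto.
    rewrite (sumR_map_ext_in _ (fun v => INR (deg ps v) + beta)), IH by (auto; intros; ring).
    rewrite length_app, !mult_INR, !S_INR, plus_INR. simpl. ring.
Qed.

Lemma Y0_cluster_rate beta ps : wf_tree ps -> forall bs, length bs = length ps ->
  Y0 beta ps bs =
  sumR (map (fun v => (if inT0 ps bs v then 1 else 0) * (INR (deg ps v) + beta))
            (seq 0 (S (length ps)))).
Proof.
  induction ps as [|i ps IH] using rev_ind; intros W bs Lb.
  - destruct bs; [|discriminate]. unfold Y0, sizeT0, H0, inT0, deg; simpl. ring.
  - apply wf_tree_app_inv in W as [W Hi].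
    rewrite length_app in Lb; simpl in Lb.
    destruct (exists_last (l := bs)) as [bs0 [b ->]]; [intros ->; simpl in Lb; lia|].
    rewrite length_app in Lb; simpl in Lb.
    assert (Lb0 : length bs0 = length ps) by lia.
    rewrite Y0_app, IH, weighted_deg_sum_app by auto.
    rewrite inT0_new, (inT0_app _ _ i b i) by auto.
    rewrite (sumR_map_ext_in
      (fun v => (if inT0 (ps ++ [i]) (bs0 ++ [b]) v then 1 else 0) * (INR (deg ps v) + beta))
      (fun v => (if inT0 ps bs0 v then 1 else 0) * (INR (deg ps v) + beta))).
    2:{ intros v Hv. apply in_seq in Hv. rewrite inT0_app by (auto; lia). reflexivity. }
    destruct b, (inT0 ps bs0 i); simpl; ring.
Qed.

Definition Vtot (beta : R) (k : nat) : R := INR (2 * (k + 1)) + beta * INR (k + 2).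

Lemma Vtot_eq beta k : Vtot beta k = (2 + beta) * (INR k + 1) + beta.
Proof. unfold Vtot. rewrite mult_INR, !plus_INR. simpl. ring. Qed.

Lemma Vtot_pos beta k : beta > -1 -> 0 < Vtot beta k.
Proof. intros Hb. rewrite Vtot_eq. pose proof (pos_INR k). nra. Qed.

Lemma Vtot_ge1 beta k : beta > -1 -> 1 <= Vtot beta (S k).
Proof. intros Hb. rewrite Vtot_eq, S_INR. pose proof (pos_INR k). nra. Qed.

Lemma Vtot_S beta k : Vtot beta (S k) = Vtot beta k + (2 + beta).
Proof. rewrite !Vtot_eq, S_INR. ring. Qed.

Lemma tdist_supp beta : beta > -1 -> forall k pw, In pw (tdist beta k) ->
  length (fst pw) = S k /\ wf_tree (fst pw) /\ 0 <= snd pw.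
Proof.
  intros Hb k; induction k as [|k IH]; intros pw Hpw.
  - destruct Hpw as [<-|[]]. repeat split; simpl; try lra.
    intros j Hj. simpl in Hj. replace j with 1%nat by lia. unfold parent; simpl; lia.
  - cbn [tdist] in Hpw. fold (Vtot beta k) in Hpw.
    apply in_flat_map in Hpw as [pw0 [H0 H1]].
    apply in_map_iff in H1 as [i [<- Hi]]. apply in_seq in Hi.
    destruct (IH pw0 H0) as [L [W P]]. cbn [fst snd].
    split; [rewrite length_app, L; simpl; lia | split; [apply wf_tree_app; [exact W | lia]|]].
    assert (Hd : (1 <= deg (fst pw0) i)%nat).
    { apply deg_pos; [auto | intros E; rewrite E in L; discriminate | lia]. }
    apply le_INR in Hd. pose proof (Vtot_pos beta k Hb) as HV.
    apply Rmult_le_pos; [auto|]. unfold Rdiv. apply Rmult_le_pos; [simpl in Hd; lra | left; apply Rinv_0_lt_compat; lra].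
Qed.

Lemma mdist_supp q : 0 <= q <= 1 -> forall n bw, In bw (mdist q n) ->
  length (fst bw) = n /\ 0 <= snd bw.
Proof.
  intros Hq n; induction n as [|n IH]; intros bw Hbw.
  - destruct Hbw as [<-|[]]. simpl; split; auto; lra.
  - simpl in Hbw. apply in_flat_map in Hbw as [bw0 [H0 H1]].
    destruct (IH bw0 H0) as [L P].
    destruct H1 as [<-|[<-|[]]]; simpl; rewrite length_app, L; simpl;
      (split; [lia|]); apply Rmult_le_pos; lra.
Qed.

Definition expect (beta q : R) (k : nat) (F : list nat -> list bool -> R) : R :=
  sumR (map (fun pw => sumR (map (fun bw => snd pw * snd bw * F (fst pw) (fst bw))
                                 (mdist q (S k)))) (tdist beta k)).

Section Expectation.
Variables (beta q : R).
Hypotheses (Hb : beta > -1) (Hq : 0 <= q <= 1).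

Lemma expect_plus k F G :
  expect beta q k (fun ps bs => F ps bs + G ps bs) = expect beta q k F + expect beta q k G.
Proof.
  unfold expect. rewrite <- sumR_map_plus. apply sumR_map_ext_in; intros pw _.
  rewrite <- sumR_map_plus. apply sumR_map_ext_in; intros bw _. ring.
Qed.

Lemma expect_scal k c F :
  expect beta q k (fun ps bs => c * F ps bs) = c * expect beta q k F.
Proof.
  unfold expect. rewrite <- sumR_map_scal. apply sumR_map_ext_in; intros pw _.
  rewrite <- sumR_map_scal. apply sumR_map_ext_in; intros bw _. ring.
Qed.

Lemma expect_ext k F G :
  (forall ps bs, wf_tree ps -> length ps = S k -> length bs = S k -> F ps bs = G ps bs) ->
  expect beta q k F = expect beta q k G.
Proof.
  intros H. unfold expect. apply sumR_map_ext_in; intros pw Hp.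
  apply sumR_map_ext_in; intros bw Hbw.
  destruct (tdist_supp beta Hb k pw Hp) as [L [W _]].
  destruct (mdist_supp q Hq _ bw Hbw) as [Lb _]. rewrite H; auto.
Qed.

Lemma expect_mono k F G :
  (forall ps bs, F ps bs <= G ps bs) -> expect beta q k F <= expect beta q k G.
Proof.
  intros H. unfold expect. apply sumR_map_le; intros pw Hp.
  apply sumR_map_le; intros bw Hbw.
  destruct (tdist_supp beta Hb k pw Hp) as [_ [_ P1]].
  destruct (mdist_supp q Hq _ bw Hbw) as [_ P2].
  apply Rmult_le_compat_l; [apply Rmult_le_pos|]; auto.
Qed.

Lemma expect_nonneg k F : (forall ps bs, 0 <= F ps bs) -> 0 <= expect beta q k F.
Proof.
  intros H. apply Rle_trans with (expect beta q k (fun ps bs => 0 * F ps bs)).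
  - rewrite expect_scal. lra.
  - apply expect_mono. intros. rewrite Rmult_0_l. apply H.
Qed.

(* Tower property: one more step of the chain attaches a vertex to i with
   probability (deg i + beta)/Vtot and marks its edge intact with probability q. *)
Lemma expect_step k F : expect beta q (S k) F =
  expect beta q k (fun ps bs => sumR (map (fun i => (INR (deg ps i) + beta) / Vtot beta k *
     (q * F (ps ++ [i]) (bs ++ [true]) + (1 - q) * F (ps ++ [i]) (bs ++ [false])))
     (seq 0 (k + 2)))).
Proof.
  unfold expect. cbn [tdist]. fold (Vtot beta k). rewrite sumR_flat_map.
  apply sumR_map_ext_in. intros pw0 _. rewrite map_map. cbn [fst snd].
  transitivity (sumR (map (fun i => sumR (map (fun bw0 =>
     snd pw0 * snd bw0 * ((INR (deg (fst pw0) i) + beta) / Vtot beta k *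
     (q * F (fst pw0 ++ [i]) (fst bw0 ++ [true])
      + (1 - q) * F (fst pw0 ++ [i]) (fst bw0 ++ [false]))))
     (mdist q (S k)))) (seq 0 (k + 2)))).
  { apply sumR_map_ext_in; intros i _. cbn [mdist]. rewrite sumR_flat_map.
    apply sumR_map_ext_in; intros bw0 _. simpl. ring. }
  rewrite sumR_exchange. apply sumR_map_ext_in; intros bw0 _.
  rewrite <- sumR_map_scal. reflexivity.
Qed.

(* The one-step average of a quantity that jumps by B exactly when the new
   vertex attaches to the root cluster: the attachment probability is Y/Vtot. *)
Lemma one_step_average k ps bs A B :
  wf_tree ps -> length ps = S k -> length bs = S k ->
  sumR (map (fun i => (INR (deg ps i) + beta) / Vtot beta k *
        (A + (if inT0 ps bs i then 1 else 0) * B)) (seq 0 (k + 2)))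
  = A + B * (Y0 beta ps bs / Vtot beta k).
Proof.
  intros W L Lb. pose proof (Vtot_pos beta k Hb) as HV.
  rewrite (sumR_map_ext_in _ (fun i => (A / Vtot beta k) * (INR (deg ps i) + beta) +
      (B / Vtot beta k) * ((if inT0 ps bs i then 1 else 0) * (INR (deg ps i) + beta)))).
  2:{ intros i _. field. lra. }
  rewrite sumR_map_plus, !sumR_map_scal.
  replace (k + 2)%nat with (S (length ps)) by lia.
  rewrite total_rate, <- Y0_cluster_rate by (auto; lia).
  replace (INR (2 * length ps) + beta * INR (S (length ps))) with (Vtot beta k)
    by (unfold Vtot; rewrite L; f_equal; f_equal; f_equal; lia).
  field. lra.
Qed.

Lemma expect_one k : expect beta q k (fun _ _ => 1) = 1.
Proof.
  induction k as [|k IH]; [unfold expect; simpl; ring|].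
  rewrite expect_step. rewrite <- IH at 1. apply expect_ext. intros ps bs W L Lb.
  rewrite (sumR_map_ext_in _ (fun i => (INR (deg ps i) + beta) / Vtot beta k *
      (1 + (if inT0 ps bs i then 1 else 0) * 0))).
  2:{ intros i _. ring. }
  rewrite one_step_average by auto. ring.
Qed.

End Expectation.

(* First and second moments of the increment of Y when the new vertex
   attaches to the root cluster (2+beta with probability q, 1 otherwise). *)
Definition jump1 (beta q : R) : R := q * (2 + beta) + (1 - q).
Definition jump2 (beta q : R) : R := q * (2 + beta) ^ 2 + (1 - q).

(* Exact first and second moments of Y at tau_{k+1}, by their recursions. *)
Fixpoint meanY (beta q : R) (k : nat) : R :=
  match k with
  | O => q * (2 + 2 * beta) + (1 - q) * (1 + beta)
  | S k' => meanY beta q k' * (1 + jump1 beta q / Vtot beta k')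
  end.

Fixpoint secondY (beta q : R) (k : nat) : R :=
  match k with
  | O => q * (2 + 2 * beta) ^ 2 + (1 - q) * (1 + beta) ^ 2
  | S k' => secondY beta q k' * (1 + 2 * jump1 beta q / Vtot beta k')
            + jump2 beta q * meanY beta q k' / Vtot beta k'
  end.

Section Moments.
Variables (beta q : R).
Hypotheses (Hb : beta > -1) (Hq : 0 <= q <= 1).

Lemma Y0_initial : Y0 beta [0%nat] [true] = 2 + 2 * beta /\ Y0 beta [0%nat] [false] = 1 + beta.
Proof. unfold Y0, sizeT0, H0, inT0, intact, parent; simpl; split; ring. Qed.

Lemma Y0_step k ps bs i b : wf_tree ps -> length ps = S k -> length bs = S k ->
  In i (seq 0 (k + 2)) ->
  Y0 beta (ps ++ [i]) (bs ++ [b]) =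
  Y0 beta ps bs + (if inT0 ps bs i then 1 else 0) * (if b then 2 + beta else 1).
Proof. intros W L Lb Hi. apply in_seq in Hi. apply Y0_app; auto; lia. Qed.

Lemma expect_Y k : expect beta q k (Y0 beta) = meanY beta q k.
Proof.
  induction k as [|k IH].
  - unfold expect. simpl. destruct Y0_initial as [E1 E2]. rewrite E1, E2. ring.
  - rewrite expect_step by auto. simpl meanY. rewrite <- IH.
    transitivity (expect beta q k (fun ps bs => (1 + jump1 beta q / Vtot beta k) * Y0 beta ps bs));
      [|rewrite expect_scal; ring].
    apply expect_ext; auto. intros ps bs W L Lb.
    rewrite (sumR_map_ext_in _ (fun i => (INR (deg ps i) + beta) / Vtot beta k *
        (Y0 beta ps bs + (if inT0 ps bs i then 1 else 0) * jump1 beta q))).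
    2:{ intros i Hi. rewrite !(Y0_step k ps bs i) by auto. unfold jump1.
        destruct (inT0 ps bs i); ring. }
    rewrite one_step_average by auto. unfold Rdiv. ring.
Qed.

Lemma expect_Y2 k : expect beta q k (fun ps bs => Y0 beta ps bs ^ 2) = secondY beta q k.
Proof.
  induction k as [|k IH].
  - unfold expect. simpl. destruct Y0_initial as [E1 E2]. rewrite E1, E2. ring.
  - rewrite expect_step by auto. simpl secondY. rewrite <- IH, <- expect_Y.
    transitivity (expect beta q k (fun ps bs =>
      (1 + 2 * jump1 beta q / Vtot beta k) * Y0 beta ps bs ^ 2
      + (jump2 beta q / Vtot beta k) * Y0 beta ps bs)).
    2:{ rewrite expect_plus, !expect_scal. pose proof (Vtot_pos beta k Hb). field. lra. }
    apply expect_ext; auto. intros ps bs W L Lb.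
    rewrite (sumR_map_ext_in _ (fun i => (INR (deg ps i) + beta) / Vtot beta k *
        (Y0 beta ps bs ^ 2 + (if inT0 ps bs i then 1 else 0) *
          (2 * jump1 beta q * Y0 beta ps bs + jump2 beta q)))).
    2:{ intros i Hi. rewrite !(Y0_step k ps bs i) by auto. unfold jump1, jump2.
        destruct (inT0 ps bs i); ring. }
    rewrite one_step_average by auto. unfold Rdiv. ring.
Qed.

Definition meanN (k : nat) : R := meanY beta q k / Vtot beta k.
Definition varN (k : nat) : R := secondY beta q k / Vtot beta k ^ 2 - meanN k ^ 2.

(* Var(Y/Vtot) >= 0, i.e. E[(Y/Vtot - meanN)^2] >= 0 expanded by linearity. *)
Lemma varN_nonneg k : 0 <= varN k.
Proof.
  assert (H : 0 <= expect beta q k (fun ps bs => (Y0 beta ps bs / Vtot beta k - meanN k) ^ 2))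
    by (apply expect_nonneg; auto; intros; apply pow2_ge_0).
  pose proof (Vtot_pos beta k Hb).
  rewrite (expect_ext beta q Hb Hq k _ (fun ps bs =>
     (/ Vtot beta k ^ 2 * Y0 beta ps bs ^ 2 + (-2 * meanN k / Vtot beta k) * Y0 beta ps bs)
     + meanN k ^ 2 * 1)) in H by (intros; field; lra).
  rewrite !expect_plus, !expect_scal, expect_one, expect_Y2 in H by auto.
  rewrite expect_Y in H. unfold varN. unfold meanN in *.
  replace (secondY beta q k / Vtot beta k ^ 2 - (meanY beta q k / Vtot beta k) ^ 2)
    with (/ Vtot beta k ^ 2 * secondY beta q k
          + -2 * (meanY beta q k / Vtot beta k) / Vtot beta k * meanY beta q k
          + (meanY beta q k / Vtot beta k) ^ 2 * 1) by (field; lra).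
  exact H.
Qed.

Lemma prob_at_expect n E : (1 <= n)%nat ->
  prob_at beta q n E = expect beta q (n - 1) (fun ps bs => if E ps bs then 1 else 0).
Proof.
  intros Hn. unfold prob_at, expect. apply sumR_map_ext_in. intros pw Hp.
  destruct (tdist_supp beta Hb _ pw Hp) as [L _]. rewrite L.
  replace (S (n - 1)) with n by lia.
  apply sumR_map_ext_in. intros bw _. destruct (E (fst pw) (fst bw)); ring.
Qed.

Lemma chebyshev_Y n eps c0 : (1 <= n)%nat -> eps > 0 ->
  0 <= prob_at beta q n (fun ps bs => Rgtb (Rabs (Y0 beta ps bs / INR n - c0)) eps) <=
  ((Vtot beta (n - 1) / INR n) ^ 2 * varN (n - 1)
   + (Vtot beta (n - 1) / INR n * meanN (n - 1) - c0) ^ 2) / eps ^ 2.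
Proof.
  intros Hn He. rewrite prob_at_expect by auto.
  split; [apply expect_nonneg; auto; intros; unfold Rgtb; destruct (Rlt_dec _ _); lra|].
  set (k := (n - 1)%nat).
  assert (HN : 0 < INR n) by (apply lt_0_INR; lia).
  apply Rle_trans with (expect beta q k (fun ps bs =>
     (/ eps ^ 2 / INR n ^ 2) * Y0 beta ps bs ^ 2
     + (- 2 * c0 / INR n / eps ^ 2) * Y0 beta ps bs + (c0 ^ 2 / eps ^ 2) * 1)).
  - apply expect_mono; auto. intros ps bs. unfold Rgtb.
    set (x := Y0 beta ps bs).
    replace (/ eps ^ 2 / INR n ^ 2 * x ^ 2 + - 2 * c0 / INR n / eps ^ 2 * x + c0 ^ 2 / eps ^ 2 * 1)
      with ((x / INR n - c0) ^ 2 / eps ^ 2) by (field; lra).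
    assert (0 < eps ^ 2) by nra.
    destruct (Rlt_dec eps (Rabs (x / INR n - c0))) as [Hl|Hl].
    + rewrite <- pow2_abs. apply (Rmult_le_reg_r (eps ^ 2)); auto. unfold Rdiv.
      rewrite Rmult_assoc, Rinv_l by lra. nra.
    + apply Rmult_le_pos; [apply pow2_ge_0 | left; apply Rinv_0_lt_compat; auto].
  - rewrite !expect_plus, !expect_scal, expect_one, expect_Y2 by auto.
    rewrite expect_Y. unfold varN, meanN. pose proof (Vtot_pos beta k Hb).
    apply Req_le. field. split; lra.
Qed.

End Moments.

(* delta = (1-q)(1+beta) is the rate at which the normalised mean decays. *)
Definition delta (beta q : R) : R := (1 - q) * (1 + beta).

(* Hsum k = sum_{j=1}^{k} 1 / Vtot j, a harmonic-type sum of order ln k / (2+beta). *)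
Fixpoint Hsum (beta : R) (k : nat) : R :=
  match k with O => 0 | S k' => Hsum beta k' + / Vtot beta (S k') end.

(* One step of the variance recursion, as a fact about reals: V = Vtot k,
   g = 2+beta, jump1 = g - dl, jump2 = b <= g^2, u = normalised mean,
   e = normalised second moment. *)
Lemma variance_step_algebra V g dl b u e :
  0 < V -> 1 < g -> 0 <= dl -> 0 <= u <= 1 -> u ^ 2 <= e -> 0 <= b <= g ^ 2 ->
  (e * V * (V + 2 * (g - dl)) + b * u) / (V + g) ^ 2 - (u * (V + g - dl) / (V + g)) ^ 2
  <= e - u ^ 2 + (2 * g * dl + g ^ 2 * (1 - u)) / (V + g) ^ 2.
Proof.
  intros HV Hg Hdl Hu He Hbb.
  assert (HW : 0 < (V + g) ^ 2) by nra.
  apply Rminus_le.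
  match goal with |- ?L - ?R <= 0 =>
    replace (L - R) with (((e - u ^ 2) * (- (2 * V * dl + g ^ 2)) + b * u
       - (g - dl) ^ 2 * u ^ 2 - 2 * g * dl - g ^ 2 * (1 - u)) / (V + g) ^ 2) by (field; lra)
  end.
  assert (T1 : (e - u ^ 2) * (- (2 * V * dl + g ^ 2)) <= 0).
  { assert (0 <= 2 * V * dl + g ^ 2) by nra. nra. }
  assert (T2 : b * u <= g ^ 2 * u) by nra.
  assert (T3 : 2 * g ^ 2 * u - (g - dl) ^ 2 * u ^ 2 - 2 * g * dl - g ^ 2 =
     - (g ^ 2 * (1 - u) ^ 2) - 2 * g * dl * (1 - u ^ 2) - dl ^ 2 * u ^ 2) by ring.
  assert (0 <= 2 * g * dl * (1 - u ^ 2)) by (apply Rmult_le_pos; nra).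
  assert (0 <= g ^ 2 * (1 - u) ^ 2) by (apply Rmult_le_pos; apply pow2_ge_0).
  assert (0 <= dl ^ 2 * u ^ 2) by (apply Rmult_le_pos; apply pow2_ge_0).
  assert (0 < / (V + g) ^ 2) by (apply Rinv_0_lt_compat; lra).
  unfold Rdiv. nra.
Qed.

Lemma Hsum_nonneg beta k : beta > -1 -> 0 <= Hsum beta k.
Proof.
  intros Hb. induction k; simpl; [lra|].
  pose proof (Rinv_0_lt_compat _ (Vtot_pos beta (S k) Hb)). lra.
Qed.

Section NormalisedMoments.
Variables (beta q : R).
Hypotheses (Hb : beta > -1) (Hq : 0 < q < 1).

Let Hq' : 0 <= q <= 1. Proof. lra. Qed.

Lemma delta_nonneg : 0 <= delta beta q.
Proof. unfold delta; nra. Qed.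

Lemma delta_lt_Vtot k : delta beta q < Vtot beta k.
Proof. unfold delta. rewrite Vtot_eq. pose proof (pos_INR k). nra. Qed.

Lemma meanN_0 : meanN beta q 0 = (1 + q) / 2.
Proof. unfold meanN, Vtot. simpl. field. lra. Qed.

Lemma meanN_S k : meanN beta q (S k) = meanN beta q k * (1 - delta beta q / Vtot beta (S k)).
Proof.
  unfold meanN. simpl meanY. pose proof (Vtot_pos beta k Hb).
  rewrite Vtot_S. unfold jump1, delta. field. split; lra.
Qed.

Lemma decay_factor_bounds k : 0 <= delta beta q / Vtot beta (S k) <= 1.
Proof.
  pose proof (delta_lt_Vtot (S k)). pose proof (Vtot_pos beta (S k) Hb).
  pose proof delta_nonneg.
  split; [apply Rmult_le_pos; [lra | left; apply Rinv_0_lt_compat; lra]|].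
  apply (Rmult_le_reg_r (Vtot beta (S k))); [lra|]. unfold Rdiv.
  rewrite Rmult_assoc, Rinv_l by lra. lra.
Qed.

Lemma meanN_bounds k : 0 <= meanN beta q k <= 1.
Proof.
  induction k as [|k IH]; [rewrite meanN_0; lra|].
  rewrite meanN_S. pose proof (decay_factor_bounds k). nra.
Qed.

(* 1 - meanN grows at most like delta Hsum; this controls the variance increments. *)
Lemma one_minus_meanN k : 1 - meanN beta q k <= (1 - q) / 2 + delta beta q * Hsum beta k.
Proof.
  induction k as [|k IH]; [rewrite meanN_0; simpl; lra|].
  rewrite meanN_S. simpl Hsum.
  pose proof (meanN_bounds k). pose proof (decay_factor_bounds k).
  replace (delta beta q * (Hsum beta k + / Vtot beta (S k))) with
    (delta beta q * Hsum beta k + delta beta q / Vtot beta (S k)) by (unfold Rdiv; ring).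
  nra.
Qed.

Lemma varN_step k : varN beta q (S k) <= varN beta q k +
  (2 * (2 + beta) * delta beta q + (2 + beta) ^ 2 * (1 - meanN beta q k)) / Vtot beta (S k) ^ 2.
Proof.
  pose proof (meanN_bounds k) as Hu. pose proof (varN_nonneg beta q Hb Hq' k) as Hv.
  unfold varN in *.
  pose proof (Vtot_pos beta k Hb) as HV.
  set (V := Vtot beta k) in *.
  assert (Hs : secondY beta q k = (secondY beta q k / V ^ 2) * V ^ 2) by (field; lra).
  assert (Hm : meanY beta q k = meanN beta q k * V) by (unfold meanN; fold V; field; lra).
  unfold meanN at 1 2. simpl meanY; simpl secondY.
  rewrite Vtot_S. fold V. rewrite Hs, Hm.
  replace (jump1 beta q) with ((2 + beta) - delta beta q) by (unfold jump1, delta; ring).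
  set (u := meanN beta q k) in *. set (e := secondY beta q k / V ^ 2) in *.
  assert (Hb2 : 0 <= jump2 beta q <= (2 + beta) ^ 2).
  { assert (1 <= (2 + beta) ^ 2) by nra. unfold jump2; nra. }
  pose proof (variance_step_algebra V (2 + beta) (delta beta q) (jump2 beta q) u e
                HV ltac:(lra) delta_nonneg Hu ltac:(lra) Hb2) as A.
  replace (e * V ^ 2 / V ^ 2) with e by (field; lra).
  replace (u * V / V) with u by (field; lra).
  match goal with |- ?L <= _ => replace L with
    ((e * V * (V + 2 * (2 + beta - delta beta q)) + jump2 beta q * u) / (V + (2 + beta)) ^ 2
     - (u * (V + (2 + beta) - delta beta q) / (V + (2 + beta))) ^ 2) by (field; lra) end.
  exact A.
Qed.
(* A potential dominating varN that does not increase along the chain: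
   the extra terms pay for the increments allowed by varN_step. *)
Definition var_potential (k : nat) : R :=
  varN beta q k + (2 * delta beta q + (2 + beta) * (1 - q)) / Vtot beta k
  + (2 + beta) * delta beta q * (Hsum beta k + / (2 + beta)) / Vtot beta k.

Lemma var_potential_step k : var_potential (S k) <= var_potential k.
Proof.
  unfold var_potential.
  pose proof (varN_step k) as D. pose proof (one_minus_meanN k) as O.
  pose proof (Hsum_nonneg beta k Hb) as HH. pose proof (Vtot_pos beta k Hb) as HV.
  pose proof delta_nonneg as Hdl.
  simpl Hsum. rewrite Vtot_S in *.
  set (V := Vtot beta k) in *. set (H := Hsum beta k) in *.
  set (g := 2 + beta) in *. set (dl := delta beta q) in *.
  assert (Hg : 1 < g) by (unfold g; lra).
  set (x := / V). set (y := / (V + g)).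
  assert (Hx : 0 < x) by (apply Rinv_0_lt_compat; lra).
  assert (Hy : 0 < y) by (apply Rinv_0_lt_compat; lra).
  assert (Hxy : x - y = g * x * y) by (unfold x, y; field; lra).
  assert (Hyx : y <= x) by (assert (0 < g * x * y) by (apply Rmult_lt_0_compat; [apply Rmult_lt_0_compat|]; lra); lra).
  replace ((2 * g * dl + g ^ 2 * (1 - meanN beta q k)) / (V + g) ^ 2)
    with ((2 * g * dl + g ^ 2 * (1 - meanN beta q k)) * y ^ 2) in D by (unfold y; field; lra).
  replace (g * dl * (H + y + / g) / (V + g))
    with ((g * dl * H + dl + g * dl * y) * y) by (unfold y; field; lra).
  replace ((2 * dl + g * (1 - q)) / (V + g)) with ((2 * dl + g * (1 - q)) * y) by (unfold y; field; lra).
  replace ((2 * dl + g * (1 - q)) / V) with ((2 * dl + g * (1 - q)) * x) by (unfold x; field; lra).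
  replace (g * dl * (H + / g) / V) with ((g * dl * H + dl) * x) by (unfold x; field; lra).
  assert (Hmu : (2 * g * dl + g ^ 2 * (1 - meanN beta q k)) * y ^ 2 <=
                (2 * g * dl + g ^ 2 * (1 - q) + g ^ 2 * dl * H) * y ^ 2).
  { apply Rmult_le_compat_r; [apply pow2_ge_0|]. nra. }
  assert (K : (2 * g * dl + g ^ 2 * (1 - q) + g ^ 2 * dl * H) * y ^ 2 + g * dl * y * y <=
     (2 * dl + g * (1 - q) + g * dl * H + dl) * (x - y)).
  { rewrite Hxy.
    assert (0 <= (2 * dl + g * (1 - q) + g * dl * H + dl) * g * (x * y - y * y)).
    { apply Rmult_le_pos; [apply Rmult_le_pos|nra]; [|lra].
      assert (0 <= g * dl * H) by (apply Rmult_le_pos; nra). nra. }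
    nra. }
  nra.
Qed.

Definition var_bound : R :=
  q * (1 - q) / 4 + (3 * delta beta q + (2 + beta) * (1 - q)) / Vtot beta 0.

Lemma varN_bound k : varN beta q k <= var_bound.
Proof.
  assert (P : var_potential k <= var_potential 0).
  { induction k; [lra|]. eapply Rle_trans; [apply var_potential_step | exact IHk]. }
  assert (varN beta q k <= var_potential k).
  { unfold var_potential. pose proof (Hsum_nonneg beta k Hb). pose proof (Vtot_pos beta k Hb).
    pose proof delta_nonneg.
    assert (0 < / (2 + beta)) by (apply Rinv_0_lt_compat; lra).
    assert (0 <= (2 * delta beta q + (2 + beta) * (1 - q)) / Vtot beta k)
      by (apply Rmult_le_pos; [nra | left; apply Rinv_0_lt_compat; lra]).
    assert (0 <= (2 + beta) * delta beta q * (Hsum beta k + / (2 + beta)) / Vtot beta k)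
      by (apply Rmult_le_pos; [apply Rmult_le_pos; nra | left; apply Rinv_0_lt_compat; lra]).
    lra. }
  assert (var_potential 0 = var_bound).
  { unfold var_potential, var_bound, varN, meanN, Vtot. simpl. unfold delta. field. lra. }
  lra.
Qed.
End NormalisedMoments.

Lemma exp_le_mono x y : x <= y -> exp x <= exp y.
Proof. intros [H|H]; [left; apply exp_increasing; auto | subst; lra]. Qed.

Lemma exp_lower x : 0 <= x <= 1/2 -> exp (- x - 2 * x ^ 2) <= 1 - x.
Proof.
  intros Hx.
  apply Rle_trans with (exp (- (x / (1 - x)))).
  { apply exp_le_mono.
    enough (x / (1 - x) <= x + 2 * x ^ 2) by lra.
    apply (Rmult_le_reg_r (1 - x)); [lra|]. unfold Rdiv.
    rewrite Rmult_assoc, Rinv_l by lra. nra. }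
  rewrite exp_Ropp. pose proof (exp_ineq1_le (x / (1 - x))).
  replace (1 - x) with (/ / (1 - x)) at 2 by (field; lra).
  apply Rinv_le_contravar; [apply Rinv_0_lt_compat; lra|].
  replace (/ (1 - x)) with (1 + x / (1 - x)) by (field; lra). lra.
Qed.

(* Concavity of ln: ln b - ln a <= (b - a) / a. *)
Lemma ln_diff a b : 0 < a -> 0 < b -> ln b - ln a <= (b - a) / a.
Proof.
  intros Ha Hb. replace b with (a * (b / a)) at 1 by (field; lra).
  rewrite ln_mult by (auto; apply Rdiv_lt_0_compat; auto).
  enough (ln (b / a) <= (b - a) / a) by lra.
  rewrite <- (ln_exp ((b - a) / a)). apply ln_le; [apply Rdiv_lt_0_compat; auto|].
  pose proof (exp_ineq1_le ((b - a) / a)).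
  replace (b / a) with (1 + (b - a) / a) by (field; lra). lra.
Qed.

Lemma Hsum_ln_bounds beta k : beta > -1 ->
  ln (Vtot beta (S k)) - ln (Vtot beta 1) <= (2 + beta) * Hsum beta k
  <= ln (Vtot beta k) - ln (Vtot beta 0).
Proof.
  intros Hb. induction k as [|k [L U]]; [simpl; lra|].
  simpl Hsum.
  pose proof (Vtot_pos beta k Hb). pose proof (Vtot_pos beta (S k) Hb).
  pose proof (Vtot_pos beta (S (S k)) Hb).
  pose proof (ln_diff (Vtot beta (S k)) (Vtot beta (S (S k)))) as Up.
  pose proof (ln_diff (Vtot beta (S k)) (Vtot beta k)) as Down.
  rewrite (Vtot_S beta (S k)) in *. rewrite (Vtot_S beta k) in *.
  replace ((2 + beta) * (Hsum beta k + / (Vtot beta k + (2 + beta)))) with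
    ((2 + beta) * Hsum beta k + (2 + beta) / (Vtot beta k + (2 + beta))) by (unfold Rdiv; ring).
  replace (Vtot beta k + (2 + beta) + (2 + beta) - (Vtot beta k + (2 + beta))) with (2 + beta)
    in Up by ring.
  replace ((Vtot beta k - (Vtot beta k + (2 + beta))) / (Vtot beta k + (2 + beta)))
    with (- ((2 + beta) / (Vtot beta k + (2 + beta)))) in Down by (field; lra).
  specialize (Up ltac:(lra) ltac:(lra)). specialize (Down ltac:(lra) ltac:(lra)).
  lra.
Qed.

Lemma meanN_exp_bounds beta q k : beta > -1 -> 0 < q < 1 -> delta beta q <= 1/2 ->
  (1 + q) / 2 * exp (- (delta beta q * (1 + 2 * delta beta q)) * Hsum beta k)
  <= meanN beta q k <= (1 + q) / 2 * exp (- delta beta q * Hsum beta k).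
Proof.
  intros Hb Hq Hd. induction k as [|k [L U]].
  - rewrite meanN_0 by auto. simpl. rewrite !Rmult_0_r, exp_0. lra.
  - rewrite meanN_S by auto. simpl Hsum.
    pose proof (delta_nonneg beta q Hb Hq) as Hdl.
    set (dl := delta beta q) in *. set (x := dl / Vtot beta (S k)).
    pose proof (decay_factor_bounds beta q Hb Hq k) as Hx. fold dl x in Hx.
    assert (Hxd : x <= dl).
    { pose proof (Vtot_ge1 beta k Hb). unfold x.
      apply (Rmult_le_reg_r (Vtot beta (S k))); [lra|]. unfold Rdiv.
      rewrite Rmult_assoc, Rinv_l by lra. nra. }
    pose proof (meanN_bounds beta q Hb Hq k).
    replace (- (dl * (1 + 2 * dl)) * (Hsum beta k + / Vtot beta (S k))) with
      (- (dl * (1 + 2 * dl)) * Hsum beta k + - ((1 + 2 * dl) * x)) by (unfold x, Rdiv; ring).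
    replace (- dl * (Hsum beta k + / Vtot beta (S k))) with (- dl * Hsum beta k + - x)
      by (unfold x, Rdiv; ring).
    rewrite !exp_plus, <- !Rmult_assoc. split.
    + assert (E1 : exp (- ((1 + 2 * dl) * x)) <= 1 - x).
      { eapply Rle_trans; [|apply exp_lower; lra]. apply exp_le_mono. nra. }
      pose proof (exp_pos (- (dl * (1 + 2 * dl)) * Hsum beta k)).
      pose proof (exp_pos (- ((1 + 2 * dl) * x))).
      apply Rmult_le_compat; try lra. apply Rmult_le_pos; lra.
    + pose proof (exp_ineq1_le (- x)).
      apply Rmult_le_compat; lra.
Qed.

Lemma is_lim_seq_eq_val (u : nat -> R) (a b : R) : is_lim_seq u a -> a = b -> is_lim_seq u b.
Proof. intros H ->; auto. Qed.

Lemma ln_INR_pos n : (2 <= n)%nat -> 0 < ln (INR n).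
Proof. intros Hn. rewrite <- ln_1. apply ln_increasing; [lra | apply lt_1_INR; lia]. Qed.

Lemma cut_rate_limits c (p : nat -> R) : c > 0 ->
  Un_cv (fun n => (1 - p n) / (c / ln (INR n))) 1 ->
  is_lim_seq (fun n => (1 - p n) * ln (INR n)) c /\ is_lim_seq (fun n => 1 - p n) 0.
Proof.
  intros Hc Hlim. apply is_lim_seq_Reals in Hlim.
  assert (Hln : is_lim_seq (fun n => ln (INR n)) p_infty).
  { apply (is_lim_comp_seq ln INR p_infty p_infty is_lim_ln_p);
      [exists 0%nat; intros; discriminate | exact is_lim_seq_INR]. }
  assert (Hlog : is_lim_seq (fun n => (1 - p n) * ln (INR n)) c).
  { apply (is_lim_seq_ext_loc (fun n => c * ((1 - p n) / (c / ln (INR n))))).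
    { exists 2%nat. intros n Hn. pose proof (ln_INR_pos n Hn). field. split; lra. }
    apply (is_lim_seq_eq_val _ (c * 1)); [apply (is_lim_seq_scal_l _ c 1 Hlim) | ring]. }
  split; [exact Hlog|].
  apply (is_lim_seq_ext_loc (fun n => ((1 - p n) * ln (INR n)) * / ln (INR n))).
  { exists 2%nat. intros n Hn. pose proof (ln_INR_pos n Hn). field. lra. }
  apply (is_lim_seq_eq_val _ (c * 0)); [|ring].
  apply is_lim_seq_mult'; [exact Hlog|].
  replace (Finite 0) with (Rbar_inv p_infty) by reflexivity.
  apply is_lim_seq_inv; [exact Hln | discriminate].
Qed.

(* If d(n) ln n -> L and d(n) -> 0, then d(n) Hsum(n-1) -> L / (2+beta),
   since (2+beta) Hsum(n-1) = ln n + O(1). *)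
Lemma delta_Hsum_limit beta (d : nat -> R) (L : R) : beta > -1 ->
  (forall n, 0 <= d n) -> is_lim_seq d 0 -> is_lim_seq (fun n => d n * ln (INR n)) L ->
  is_lim_seq (fun n => d n * Hsum beta (n - 1)) (L / (2 + beta)).
Proof.
  intros Hb Hd0 Hd Hdl.
  set (c1 := ln (Vtot beta 1)). set (c2 := ln (2 * (2 + beta)) - ln (Vtot beta 0)).
  assert (Hg : 0 < / (2 + beta)) by (apply Rinv_0_lt_compat; lra).
  apply (is_lim_seq_le_le_loc
    (fun n => (d n * ln (INR n) - d n * c1) * / (2 + beta)) _
    (fun n => (d n * ln (INR n) + d n * c2) * / (2 + beta))).
  - exists 2%nat. intros n Hn. destruct n as [|m]; [lia|].
    replace (S m - 1)%nat with m by lia.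
    destruct (Hsum_ln_bounds beta m Hb) as [Lo Up].
    pose proof (Vtot_pos beta m Hb). pose proof (Vtot_pos beta (S m) Hb).
    assert (HI : 0 < INR (S m)) by (apply lt_0_INR; lia).
    pose proof (pos_INR m).
    assert (A1 : ln (INR (S m)) <= ln (Vtot beta (S m))).
    { apply ln_le; auto. rewrite Vtot_eq, S_INR. nra. }
    assert (A2 : ln (Vtot beta m) <= ln (2 * (2 + beta)) + ln (INR (S m))).
    { rewrite <- ln_mult by lra. apply ln_le; auto. rewrite Vtot_eq, S_INR. nra. }
    replace (d (S m) * Hsum beta m) with (d (S m) * ((2 + beta) * Hsum beta m) * / (2 + beta))
      by (field; lra).
    pose proof (Hd0 (S m)).
    split; apply Rmult_le_compat_r; try lra; unfold c1, c2.
    + rewrite <- Rmult_minus_distr_l. apply Rmult_le_compat_l; lra.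
    + rewrite <- Rmult_plus_distr_l. apply Rmult_le_compat_l; lra.
  - apply (is_lim_seq_eq_val _ ((L - 0 * c1) * / (2 + beta))); [|field; lra].
    apply is_lim_seq_mult'; [|apply is_lim_seq_const].
    apply is_lim_seq_minus'; [exact Hdl|].
    apply is_lim_seq_mult'; [exact Hd | apply is_lim_seq_const].
  - apply (is_lim_seq_eq_val _ ((L + 0 * c2) * / (2 + beta))); [|field; lra].
    apply is_lim_seq_mult'; [|apply is_lim_seq_const].
    apply is_lim_seq_plus'; [exact Hdl|].
    apply is_lim_seq_mult'; [exact Hd | apply is_lim_seq_const].
Qed.

Lemma is_lim_seq_exp (u : nat -> R) (l : R) : is_lim_seq u l -> is_lim_seq (fun n => exp (u n)) (exp l).
Proof.
  intros H. apply is_lim_seq_continuous; auto.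
  apply derivable_continuous_pt, derivable_pt_exp.
Qed.

Lemma delta_limit beta (p : nat -> R) :
  is_lim_seq (fun n => 1 - p n) 0 -> is_lim_seq (fun n => delta beta (p n)) 0.
Proof.
  intros Hq. apply (is_lim_seq_ext (fun n => (1 + beta) * (1 - p n))); [intros; unfold delta; ring|].
  apply (is_lim_seq_eq_val _ ((1 + beta) * 0)); [apply (is_lim_seq_scal_l _ _ 0 Hq) | ring].
Qed.

Lemma meanN_limit beta (p : nat -> R) (lam : R) : beta > -1 -> (forall n, 0 < p n < 1) ->
  is_lim_seq (fun n => 1 - p n) 0 ->
  is_lim_seq (fun n => delta beta (p n) * Hsum beta (n - 1)) lam ->
  is_lim_seq (fun n => meanN beta (p n) (n - 1)) (exp (- lam)).
Proof.
  intros Hb Hp Hq Hlam.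
  pose proof (delta_limit beta p Hq) as Hdelta.
  assert (Hhalf : is_lim_seq (fun n => (1 + p n) / 2) 1).
  { apply (is_lim_seq_ext (fun n => (2 - (1 - p n)) * / 2)); [intros; field|].
    apply (is_lim_seq_eq_val _ ((2 - 0) * / 2)); [|field].
    apply is_lim_seq_mult'; [|apply is_lim_seq_const].
    apply is_lim_seq_minus'; [apply is_lim_seq_const | exact Hq]. }
  assert (Hsmall : eventually (fun n => delta beta (p n) <= 1 / 2)).
  { apply is_lim_seq_spec in Hdelta. destruct (Hdelta (mkposreal (1/2) ltac:(lra))) as [N HN].
    exists N. intros n Hn. specialize (HN n Hn). simpl in HN. rewrite Rminus_0_r in HN.
    apply Rabs_lt_between in HN. lra. }
  apply (is_lim_seq_le_le_loc
    (fun n => (1 + p n) / 2 * exp (- (delta beta (p n) * (1 + 2 * delta beta (p n))) * Hsum beta (n - 1))) _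
    (fun n => (1 + p n) / 2 * exp (- delta beta (p n) * Hsum beta (n - 1)))).
  - destruct Hsmall as [N HN]. exists N. intros n Hn.
    apply meanN_exp_bounds; auto.
  - apply (is_lim_seq_eq_val _ (1 * exp (- (lam * (1 + 2 * 0))))); [|replace (lam * (1 + 2 * 0)) with lam by ring; ring].
    apply is_lim_seq_mult'; [exact Hhalf|]. apply is_lim_seq_exp.
    apply (is_lim_seq_ext (fun n => - ((delta beta (p n) * Hsum beta (n - 1)) * (1 + 2 * delta beta (p n)))));
      [intros; ring|].
    apply (is_lim_seq_opp _ (Finite (lam * (1 + 2 * 0)))). apply is_lim_seq_mult'; [exact Hlam|].
    apply is_lim_seq_plus'; [apply is_lim_seq_const | apply (is_lim_seq_scal_l _ 2 0 Hdelta)].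
  - apply (is_lim_seq_eq_val _ (1 * exp (- lam))); [|ring].
    apply is_lim_seq_mult'; [exact Hhalf|]. apply is_lim_seq_exp.
    apply (is_lim_seq_ext (fun n => - (delta beta (p n) * Hsum beta (n - 1)))); [intros; ring|].
    apply (is_lim_seq_opp _ (Finite lam)). exact Hlam.
Qed.

(* Vtot (n-1) = (2+beta) n + beta. *)
Lemma Vtot_over_n_limit beta : is_lim_seq (fun n => Vtot beta (n - 1) / INR n) (2 + beta).
Proof.
  apply (is_lim_seq_ext_loc (fun n => (2 + beta) + beta * / INR n)).
  { exists 1%nat. intros n Hn. destruct n as [|m]; [lia|]. replace (S m - 1)%nat with m by lia.
    rewrite Vtot_eq, S_INR. pose proof (pos_INR m). field. lra. }
  apply (is_lim_seq_eq_val _ ((2 + beta) + beta * 0)); [|ring].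
  apply is_lim_seq_plus'; [apply is_lim_seq_const | apply (is_lim_seq_scal_l _ beta 0)].
  replace (Finite 0) with (Rbar_inv p_infty) by reflexivity.
  apply is_lim_seq_inv; [exact is_lim_seq_INR | discriminate].
Qed.

Lemma var_bound_limit beta (p : nat -> R) :
  is_lim_seq (fun n => 1 - p n) 0 -> is_lim_seq (fun n => var_bound beta (p n)) 0.
Proof.
  intros Hq.
  apply (is_lim_seq_ext (fun n => ((1 - (1 - p n)) * (1 - p n) * / 4
     + (3 * (1 + beta) + (2 + beta)) * (1 - p n) * / Vtot beta 0))).
  { intros n. unfold var_bound, delta, Rdiv. ring. }
  apply (is_lim_seq_eq_val _ ((1 - 0) * 0 * / 4 + (3 * (1 + beta) + (2 + beta)) * 0 * / Vtot beta 0));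
    [|ring].
  apply is_lim_seq_plus'; (apply is_lim_seq_mult'; [|apply is_lim_seq_const]).
  - apply is_lim_seq_mult'; [|exact Hq].
    apply is_lim_seq_minus'; [apply is_lim_seq_const | exact Hq].
  - apply (is_lim_seq_scal_l _ _ 0 Hq).
Qed.

Lemma concentration_of_Y beta (p : nat -> R) (m eps : R) :
  beta > -1 -> (forall n, 0 < p n < 1) -> eps > 0 ->
  is_lim_seq (fun n => 1 - p n) 0 ->
  is_lim_seq (fun n => meanN beta (p n) (n - 1)) m ->
  is_lim_seq (fun n => prob_at beta (p n) n
    (fun ps bs => Rgtb (Rabs (Y0 beta ps bs / INR n - (2 + beta) * m)) eps)) 0.
Proof.
  intros Hb Hp He Hq Hmean.
  set (c0 := (2 + beta) * m).
  set (r := fun n => Vtot beta (n - 1) / INR n).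
  set (u := fun n => r n * meanN beta (p n) (n - 1) - c0).
  pose proof (Vtot_over_n_limit beta) as Hrate. fold r in Hrate.
  pose proof (var_bound_limit beta p Hq) as Hvar.
  apply (is_lim_seq_le_le_loc (fun _ => 0) _ (fun n =>
     (r n * r n * var_bound beta (p n) + u n * u n) * / eps ^ 2)).
  - exists 1%nat. intros n Hn.
    destruct (chebyshev_Y beta (p n) Hb ltac:(specialize (Hp n); lra) n eps c0 Hn He) as [P0 P1].
    split; [exact P0|]. eapply Rle_trans; [exact P1|]. fold (r n) (u n).
    replace ((r n * r n * var_bound beta (p n) + u n * u n) * / eps ^ 2)
      with ((r n ^ 2 * var_bound beta (p n) + u n ^ 2) / eps ^ 2) by (unfold Rdiv; ring).
    apply Rmult_le_compat_r; [left; apply Rinv_0_lt_compat; nra|].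
    apply Rplus_le_compat_r, Rmult_le_compat_l; [apply pow2_ge_0 | apply varN_bound; auto].
  - apply is_lim_seq_const.
  - apply (is_lim_seq_eq_val _
      (((2 + beta) * (2 + beta) * 0 + ((2 + beta) * m - c0) * ((2 + beta) * m - c0)) * / eps ^ 2));
      [|unfold c0; ring].
    apply is_lim_seq_mult'; [|apply is_lim_seq_const].
    apply is_lim_seq_plus'; [repeat apply is_lim_seq_mult'; auto|].
    apply is_lim_seq_mult'; apply is_lim_seq_minus';
      auto using is_lim_seq_const; apply is_lim_seq_mult'; auto.
Qed.

Theorem corollary2 (beta c : R) (p : nat -> R) :
  beta > -1 -> c > 0 ->
  (forall n, 0 < p n < 1) ->
  Un_cv (fun n => (1 - p n) / (c / ln (INR n))) 1 ->
  forall eps, eps > 0 ->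
  Un_cv (fun n => prob_at beta (p n) n
           (fun ps bs => Rgtb (Rabs (Y0 beta ps bs / INR n
                               - (2 + beta) * exp (- ((1 + beta) / (2 + beta)) * c)))
                              eps)) 0.
Proof.
  intros Hb Hc Hp Hlim eps He.
  set (lam := (1 + beta) * c / (2 + beta)).
  replace (- ((1 + beta) / (2 + beta)) * c) with (- lam) by (unfold lam; field; lra).
  destruct (cut_rate_limits c p Hc Hlim) as [Hlog Hq].
  assert (Hlam : is_lim_seq (fun n => delta beta (p n) * Hsum beta (n - 1)) lam).
  { apply delta_Hsum_limit; auto using delta_limit.
    - intros n. apply delta_nonneg; auto.
    - apply (is_lim_seq_ext (fun n => (1 + beta) * ((1 - p n) * ln (INR n))));
        [intros; unfold delta; ring | apply (is_lim_seq_scal_l _ _ c Hlog)]. }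
  apply is_lim_seq_Reals, concentration_of_Y; auto.
  apply meanN_limit; auto.
Qed.
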